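(* Let $x=(x_0x_1)^{-1}$ and $y=x_2xx_2^{-1}$. Then for all $j\ge0$: $x^{2^{2j+1}}=M_{2^{2j+1}-1}([51,89,196],[0,0,0],\dots)$, $y^{2^{2j+1}}=M_{2^{2j+1}-1}([51,89,196],[0,157,106],\dots)$, $x^{2^{2j+2}}=M_{2^{2j+2}-1}([28,235,129],[0,0,0],\dots)$, $y^{2^{2j+2}}=M_{2^{2j+2}-1}([28,235,129],[39,208,186],\dots)$.
   Context: Consider infinite upper unitriangular block matrices $X=(X_{r,s})_{r,s\ge1}$ whose entries are $3\times3$ matrices over $\mathbb F_2$, with $X_{r,r}=I$, $X_{r,s}=0$ for $s<r$, and whose upper diagonals are $3$-periodic: for each $j\ge1$ there are $a_{j1},a_{j2},a_{j3}\in M(3,\mathbb F_2)$ with $X_{r,r+j}=a_{j,i}$, where $i\in\{1,2,3\}$, $i\equiv r\pmod 3$; $a_j=[a_{j1},a_{j2},a_{j3}]$ is the $j$-th upper diagonal. For $l\ge0$, $M_l(c_1,c_2,\dots)$ denotes such a matrix whose first $l$ upper diagonals are zero and whose $(l+1)$-st, $(l+2)$-nd, $\dots$ upper diagonals are $c_1,c_2,\dots$; diagonals hidden in ''$\dots$'' are unspecified, while a matrix written $M_0(c_1,\dots,c_m)$ without dots has all further diagonals zero. A matrix $u=(u_{pq})\in M(3,\mathbb F_2)$ is encoded by the integer $256u_{11}+128u_{12}+64u_{13}+32u_{21}+16u_{22}+8u_{23}+4u_{31}+2u_{32}+u_{33}$, and a diagonal by the triple of integers of its three blocks. The elements are $x_0=M_0([11,11,11],[17,17,17],[26,26,26],[11,11,0],[17,0,0])$,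 $x_1=M_0([23,224,138],[59,136,495],[26,488,227],[23,224,0],[59,0,0])$, $x_2=M_0([46,68,217],[12,194,363],[26,326,77],[46,68,0],[12,0,0])$. *)

From HB Require Import structures.
From mathcomp Require Import all_boot all_order all_algebra.
Set Implicit Arguments. Unset Strict Implicit. Unset Printing Implicit Defensive.
Import GRing.Theory.
Local Open Scope ring_scope.

Definition blk := 'M['F_2]_3.

(* Infinite block matrices, rows/columns indexed from 0
   (paper's row r >= 1 corresponds to our row r-1). *)
Definition imat := nat -> nat -> blk.

(* Decoding of the integer code 256u11+128u12+...+u33 into a 3x3 matrix. *)
Definition dec (n : nat) : blk :=
  \matrix_(p < 3, q < 3) ((n %/ 2 ^ (8 - (3 * p + q)) %% 2)%N%:R).

(* A diagonal is a triple of codes; block i (0-based, i = paper's index - 1). *)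
Definition dtriple := (nat * nat * nat)%type.
Definition dec_diag (t : dtriple) (i : nat) : blk :=
  match (i %% 3)%N with
  | 0 => dec t.1.1
  | 1 => dec t.1.2
  | _ => dec t.2
  end.

Definition M0 (cs : seq dtriple) : imat :=
  fun r s => if r == s then 1%:M
             else if (r < s)%N then
               (if (s - r <= size cs)%N
                then dec_diag (nth (0,0,0)%N cs (s - r).-1) r else 0)
             else 0.

(* Product of upper triangular infinite matrices (finite sums). *)
Definition imul (X Y : imat) : imat :=
  fun r s => \sum_(r <= t < s.+1) X r t *m Y t s.

Definition ione : imat := fun r s => if r == s then 1%:M else 0.

Definition ipow (X : imat) (n : nat) : imat := iter n (imul X) ione.

(* Inverse of a unitriangular matrix X = I + N: sum_k (-N)^k, which is a
   finite sum entrywise since N is strictly upper triangular. *)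
Definition iinv (X : imat) : imat :=
  let N : imat := fun r s => if r == s then 0 else - X r s in
  fun r s => \sum_(k < (s - r).+1) ipow N k r s.

Definition in_group (X : imat) : Prop :=
  [/\ forall r, X r r = 1%:M,
      forall r s, (s < r)%N -> X r s = 0
    & forall r s, X (r + 3)%N (s + 3)%N = X r s].

Definition isM (l : nat) (cs : seq dtriple) (X : imat) : Prop :=
  [/\ in_group X,
      forall r k, (1 <= k <= l)%N -> X r (r + k)%N = 0
    & forall r k, (1 <= k <= size cs)%N ->
        X r (r + l + k)%N = dec_diag (nth (0,0,0)%N cs k.-1) r].

Definition x0 : imat := M0 [:: (11,11,11); (17,17,17); (26,26,26); (11,11,0); (17,0,0)]%N.
Definition x1 : imat := M0 [:: (23,224,138); (59,136,495); (26,488,227); (23,224,0); (59,0,0)]%N.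
Definition x2 : imat := M0 [:: (46,68,217); (12,194,363); (26,326,77); (46,68,0); (12,0,0)]%N.

Definition xx : imat := iinv (imul x0 x1).
Definition yy : imat := imul (imul x2 xx) (iinv x2).

From Pilot Require Import Defs.
From mathcomp Require Import all_boot all_order all_algebra.
From mathcomp Require Import zify.
From Stdlib Require Import FunctionalExtensionality.

Set Implicit Arguments.
Unset Strict Implicit.
Unset Printing Implicit Defensive.
Import GRing.Theory.
Local Open Scope ring_scope.

(* Over F_2, squaring a unitriangular matrix X = I + N gives X^2 = I + N^2.  If the first
   nonzero upper diagonals of N are the m-th one, with blocks C r, and the (m+1)-st one, with
   blocks D r, then N^2 starts at diagonal 2m with blocks C r * C (r+m), followed by
   C r * D (r+m) + D r * C (r+m+1).  Since all diagonals are 3-periodic and 2^n is 1 or 2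
   mod 3 according to the parity of n, the two leading diagonals of x^(2^n) and y^(2^n) are
   obtained from those of x and y by finitely many products of 3x3 matrices over F_2; after
   the first doubling they alternate with period 2 in n.  The first two diagonals of x and y
   are read off from those of x0, x1 and x2. *)

Lemma blk_pchar2 : (2 \in [pchar blk])%N.
Proof.
apply/andP; split=> //; apply/eqP/matrixP=> i j.
by rewrite mulmxnE !mxE mulr2n addrr_pchar2 // pchar_Fp.
Qed.

Definition upper (X : imat) := forall r s, (s < r)%N -> X r s = 0.
Definition periodic3 (X : imat) := forall r s, X (r + 3)%N (s + 3)%N = X r s.

Lemma imul_upper X Y : upper (imul X Y).
Proof. by move=> r s lt_sr; rewrite /imul big_geq. Qed.

Lemma imul_periodic3 X Y : periodic3 X -> periodic3 Y -> periodic3 (imul X Y).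
Proof.
move=> pX pY r s; rewrite /imul -addSn big_addn addnK.
by apply: eq_bigr => t _; rewrite pX pY.
Qed.

Lemma in_group_imul X Y : in_group X -> in_group Y -> in_group (imul X Y).
Proof.
case=> dX _ pX [dY _ pY]; split.
- by move=> r; rewrite /imul big_nat1 dX dY mul1mx.
- exact: imul_upper.
- exact: imul_periodic3.
Qed.

Lemma exchange_big_nat_triangle (V : nmodType) (F : nat -> nat -> V) r n :
  \sum_(r <= u < n) \sum_(r <= t < u.+1) F t u =
  \sum_(r <= t < n) \sum_(t <= u < n) F t u.
Proof.
elim: n => [|n IH]; first by rewrite !big_geq.
have [le_rn|lt_nr] := leqP r n; last by rewrite !big_geq.
rewrite big_nat_recr //= IH.
rewrite [RHS](eq_big_nat _ _ (F2 := fun t => \sum_(t <= u < n) F t u + F t n));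
  last by move=> t /andP[_ lt_tn]; rewrite big_nat_recr.
rewrite big_split /= big_nat_recr //=; congr (_ + _).
by rewrite big_nat_recr //= [X in _ = _ + X]big_geq // addr0.
Qed.

Lemma imulA X Y Z : imul (imul X Y) Z = imul X (imul Y Z).
Proof.
apply: functional_extensionality => r; apply: functional_extensionality => s.
rewrite /imul; under eq_bigr => u _ do rewrite mulmx_suml.
under [RHS]eq_bigr => t _ do rewrite mulmx_sumr.
rewrite exchange_big_nat_triangle; apply: eq_bigr => t _; apply: eq_bigr => u _.
by rewrite mulmxA.
Qed.

Lemma ione_upper : upper ione.
Proof. by move=> r s lt_sr; rewrite /ione ifN // neq_ltn lt_sr orbT. Qed.

Lemma imul1m Y : upper Y -> imul ione Y = Y.
Proof.
move=> uY; apply: functional_extensionality => r; apply: functional_extensionality => s.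
rewrite /imul; have [le_rs|lt_sr] := leqP r s; last by rewrite big_geq // uY.
rewrite big_ltn ?ltnS // /ione eqxx mul1mx big_nat_cond big1 ?addr0 //.
by move=> t /andP[/andP[lt_rt _] _]; rewrite ifN ?mul0mx // neq_ltn lt_rt.
Qed.

Lemma imulm1 Y : upper Y -> imul Y ione = Y.
Proof.
move=> uY; apply: functional_extensionality => r; apply: functional_extensionality => s.
rewrite /imul; have [le_rs|lt_sr] := leqP r s; last by rewrite big_geq // uY.
rewrite big_nat_recr //= /ione eqxx mulmx1 big_nat_cond big1 ?add0r //.
by move=> t /andP[/andP[_ lt_ts] _]; rewrite ifN ?mulmx0 // neq_ltn lt_ts.
Qed.

Lemma ipow_upper X n : upper (ipow X n).
Proof. by case: n => [|n]; [exact: ione_upper | exact: imul_upper]. Qed.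

Lemma ipowD X a b : ipow X (a + b) = imul (ipow X a) (ipow X b).
Proof.
elim: a => [|a IH]; first by rewrite add0n /= imul1m //; exact: ipow_upper.
by rewrite addSn /= IH imulA.
Qed.

Lemma ipow_periodic3 X n : periodic3 X -> periodic3 (ipow X n).
Proof.
move=> pX; elim: n => [|n IH]; last exact: imul_periodic3.
by move=> r s; rewrite /= /ione eqn_add2r.
Qed.

Lemma big_nat_single (V : nmodType) m n j (F : nat -> V) : (m <= j < n)%N ->
  (forall t, (m <= t < n)%N -> t != j -> F t = 0) -> \sum_(m <= t < n) F t = F j.
Proof.
move=> mn_j F0; rewrite (bigD1_seq j) ?mem_index_iota ?iota_uniq //= big_seq_cond.
by rewrite big1 ?addr0 // => t /andP[]; rewrite mem_index_iota; exact: F0.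
Qed.

(* In characteristic 2 the two boundary terms [1 * Y r s] and [Y r s * 1] cancel. *)
Lemma imul_sqr_interior Y r k : in_group Y -> (0 < k)%N ->
  imul Y Y r (r + k)%N = \sum_(r.+1 <= t < r + k) Y r t *m Y t (r + k)%N.
Proof.
case=> dY _ _ k_gt0; rewrite /imul big_ltn ?ltnS ?leq_addr // big_nat_recr /=; last by lia.
by rewrite !dY mul1mx mulmx1 addrCA addrr_pchar2 ?addr0 // blk_pchar2.
Qed.

Section Squaring.

Variables (Y : imat) (m : nat).
Hypotheses (Yg : in_group Y) (m_gt0 : (0 < m)%N)
  (Ygap : forall r k, (0 < k < m)%N -> Y r (r + k)%N = 0).

Let Y_gap u v : (u < v < u + m)%N -> Y u v = 0.
Proof. by move=> uv; rewrite (_ : v = u + (v - u))%N; [apply: Ygap | ]; lia. Qed.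

Lemma imul_sqr_gap r k : (0 < k < m + m)%N -> imul Y Y r (r + k)%N = 0.
Proof.
move=> k_gap; rewrite imul_sqr_interior //; last by lia.
rewrite big_nat_cond big1 // => t /andP[/andP[lt_rt lt_t] _].
have [lt_t_rm|le_rm_t] := ltnP t (r + m); first by rewrite (@Y_gap r t) ?mul0mx //; lia.
by rewrite (@Y_gap t (r + k)) ?mulmx0 //; lia.
Qed.

Lemma imul_sqr_lead r :
  imul Y Y r (r + (m + m))%N = Y r (r + m)%N *m Y (r + m)%N (r + (m + m))%N.
Proof.
rewrite imul_sqr_interior ?addn_gt0 ?m_gt0 // (@big_nat_single _ _ _ (r + m)%N) //.
  by lia.
move=> t rt ne_t; have [lt_t_rm|le_rm_t] := ltnP t (r + m).
  by rewrite (@Y_gap r t) ?mul0mx //; lia.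
by rewrite (@Y_gap t (r + (m + m))) ?mulmx0 //; lia.
Qed.

Lemma imul_sqr_next r :
  imul Y Y r (r + (m + m).+1)%N =
    Y r (r + m)%N *m Y (r + m)%N (r + (m + m).+1)%N
  + Y r (r + m.+1)%N *m Y (r + m.+1)%N (r + (m + m).+1)%N.
Proof.
rewrite imul_sqr_interior // (big_cat_nat _ (n := (r + m.+1)%N)); try lia.
rewrite (@big_nat_single _ _ _ (r + m)%N); first 1 last.
- by lia.
- by move=> t rt ne_t; rewrite (@Y_gap r t) ?mul0mx //; lia.
rewrite (@big_nat_single _ _ _ (r + m.+1)%N) //; first by lia.
by move=> t rt ne_t; rewrite (@Y_gap t (r + (m + m).+1)) ?mulmx0 //; lia.
Qed.

End Squaring.

Lemma dec_diag_addn_mod3 t r b b' :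
  b = b' %[mod 3] -> dec_diag t (r + b) = dec_diag t (r + b').
Proof.
move=> b_b'; rewrite /dec_diag; suff -> : (r + b = r + b' %[mod 3])%N by [].
by apply/eqP; rewrite eqn_modDl b_b'.
Qed.

Definition sq_lead (a : nat) (c : dtriple) (r : nat) : blk :=
  dec_diag c r *m dec_diag c (r + a).

Definition sq_next (a : nat) (c d : dtriple) (r : nat) : blk :=
  dec_diag c r *m dec_diag d (r + a) + dec_diag d r *m dec_diag c (r + a.+1).

Lemma isM_sqr X m a c d c' d' : (0 < m)%N -> m = a %[mod 3] ->
  isM m.-1 [:: c; d] X -> sq_lead a c =1 dec_diag c' -> sq_next a c d =1 dec_diag d' ->
  isM (m + m).-1 [:: c'; d'] (imul X X).
Proof.
move=> m_gt0 m_a [Xg Xgap Xdiag] lead next.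
have gapX r k : (0 < k < m)%N -> X r (r + k)%N = 0 by move=> k_m; apply: Xgap; lia.
have leadX u v : v = (u + m)%N -> X u v = dec_diag c u.
  by move=> ->; rewrite -(Xdiag u 1) //; congr X; lia.
have nextX u v : v = (u + m.+1)%N -> X u v = dec_diag d u.
  by move=> ->; rewrite -(Xdiag u 2) //; congr X; lia.
have m1_a1 : m.+1 = a.+1 %[mod 3] by rewrite -[m.+1]addn1 -[a.+1]addn1 -modnDml m_a modnDml.
split; first exact: in_group_imul.
  by move=> r k k_gap; apply: (imul_sqr_gap Xg m_gt0 gapX); lia.
move=> r [|[|[]]] // _; rewrite -addnA.
- rewrite (_ : (m + m).-1 + 1 = m + m)%N; last by lia.
  rewrite imul_sqr_lead // (leadX r) // (leadX (r + m)%N); last by lia.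
  by rewrite /= -lead /sq_lead (dec_diag_addn_mod3 _ _ m_a).
- rewrite (_ : (m + m).-1 + 2 = (m + m).+1)%N; last by lia.
  rewrite imul_sqr_next // (leadX r) // (nextX r) // (nextX (r + m)%N); last by lia.
  rewrite (leadX (r + m.+1)%N); last by lia.
  by rewrite /= -next /sq_next (dec_diag_addn_mod3 _ _ m_a) // (dec_diag_addn_mod3 _ _ m1_a1).
Qed.

Lemma isM_pow2S X n a c d c' d' : 2 ^ n = a %[mod 3] ->
  isM (2 ^ n - 1) [:: c; d] (ipow X (2 ^ n)) ->
  sq_lead a c =1 dec_diag c' -> sq_next a c d =1 dec_diag d' ->
  isM (2 ^ n.+1 - 1) [:: c'; d'] (ipow X (2 ^ n.+1)).
Proof.
rewrite expnS mul2n -addnn ipowD !subn1; apply: isM_sqr.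
by rewrite expn_gt0.
Qed.

Lemma expn2_mod3 n : 2 ^ n = (if odd n then 2 else 1) %[mod 3].
Proof. by elim: n => [|n IH] //; rewrite expnS -modnMmr IH modnMmr /=; case: odd. Qed.

Lemma eq_periodic3 (F G : nat -> blk) :
  (forall r, F (r + 3)%N = F r) -> (forall r, G (r + 3)%N = G r) ->
  F 0%N = G 0%N -> F 1%N = G 1%N -> F 2%N = G 2%N -> F =1 G.
Proof.
move=> pF pG F0 F1 F2 r; rewrite (divn_eq r 3); elim: (r %/ 3)%N => [|q IH].
  by case: (r %% 3)%N (ltn_pmod r (isT : 0 < 3)%N) => [|[|[|]]].
by rewrite mulSnr addnAC pF pG.
Qed.

Lemma dec_diag_periodic t r : dec_diag t (r + 3) = dec_diag t r.
Proof. by rewrite -[in RHS](addn0 r); apply: dec_diag_addn_mod3. Qed.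

Lemma sq_lead_periodic a c r : sq_lead a c (r + 3) = sq_lead a c r.
Proof. by rewrite /sq_lead addnAC !dec_diag_periodic. Qed.

Lemma sq_next_periodic a c d r : sq_next a c d (r + 3) = sq_next a c d r.
Proof. by rewrite /sq_next !(addnAC r 3) !dec_diag_periodic. Qed.

Lemma dec_diag0 r : dec_diag (0, 0, 0)%N r = 0.
Proof.
have dec0 : dec 0 = 0 by apply/matrixP => i j; rewrite !mxE div0n mod0n.
by rewrite /dec_diag; case: (r %% 3)%N => [|[|]].
Qed.

Lemma sq_next0 a c : sq_next a c (0, 0, 0)%N =1 dec_diag (0, 0, 0)%N.
Proof. by move=> r; rewrite /sq_next !dec_diag0 mul0mx mulmx0 addr0. Qed.

Lemma imul_diag1E A B r : imul A B r r.+1 = A r r *m B r r.+1 + A r r.+1 *m B r.+1 r.+1.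
Proof.
rewrite /imul /index_iota (_ : r.+2 - r = 2)%N; last by lia.
by rewrite /= !big_cons big_nil addr0.
Qed.

Lemma imul_diag2E A B r : imul A B r r.+2 =
  A r r *m B r r.+2 + A r r.+1 *m B r.+1 r.+2 + A r r.+2 *m B r.+2 r.+2.
Proof.
rewrite /imul /index_iota (_ : r.+3 - r = 3)%N; last by lia.
by rewrite /= !big_cons big_nil addr0 addrA.
Qed.

Lemma imul_diag1 A B r : in_group A -> in_group B ->
  imul A B r r.+1 = B r r.+1 + A r r.+1.
Proof. by case=> dA _ _ [dB _ _]; rewrite imul_diag1E dA dB mul1mx mulmx1. Qed.

Lemma imul_diag2 A B r : in_group A -> in_group B ->
  imul A B r r.+2 = B r r.+2 + A r r.+1 *m B r.+1 r.+2 + A r r.+2.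
Proof. by case=> dA _ _ [dB _ _]; rewrite imul_diag2E dA dB mul1mx mulmx1. Qed.

(* [fintype] also exports an [iinv]. *)
Local Notation iinv := Pilot.Defs.iinv.

Definition opp_strict (X : imat) : imat := fun r s => if r == s then 0 else - X r s.

Lemma iinvE X r s : iinv X r s = \sum_(k < (s - r).+1) ipow (opp_strict X) k r s.
Proof. by []. Qed.

Lemma opp_strict_upper X : in_group X -> upper (opp_strict X).
Proof. by case=> _ uX _ r s lt_sr; rewrite /opp_strict uX // oppr0 if_same. Qed.

Lemma in_group_iinv X : in_group X -> in_group (iinv X).
Proof.
move=> Xg; have [_ _ pX] := Xg; split.
- by move=> r; rewrite iinvE subnn big_ord1 /= /ione eqxx.
- move=> r s lt_sr; rewrite iinvE (_ : s - r = 0)%N; last by lia.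
  by rewrite big_ord1 /= /ione ifN // neq_ltn lt_sr orbT.
- move=> r s; rewrite !iinvE subnDr; apply: eq_bigr => k _.
  by apply: ipow_periodic3 => u v; rewrite /opp_strict eqn_add2r pX.
Qed.

(* The inverse is [I - N + N^2 - ...]; in characteristic 2 the signs disappear. *)
Lemma iinv_diag1 X r : in_group X -> iinv X r r.+1 = X r r.+1.
Proof.
move=> Xg; rewrite iinvE subSnn !big_ord_recr big_ord0 /= imulm1; last exact: opp_strict_upper.
by rewrite /ione /opp_strict /= ltn_eqF // !add0r oppr_pchar2 // blk_pchar2.
Qed.

Lemma iinv_diag2 X r : in_group X ->
  iinv X r r.+2 = X r r.+2 + X r r.+1 *m X r.+1 r.+2.
Proof.
move=> Xg; rewrite iinvE (_ : r.+2 - r = 2)%N; last by lia.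
rewrite !big_ord_recr big_ord0 /= !imulm1 ?imul_diag2E; try exact: opp_strict_upper.
rewrite /ione /opp_strict /= !eqxx !ltn_eqF // !mul0mx mulmx0 !add0r addr0.
by rewrite !(oppr_pchar2 blk_pchar2).
Qed.

Lemma in_group_M0 cs : in_group (M0 cs).
Proof.
split.
- by move=> r; rewrite /M0 eqxx.
- by move=> r s lt_sr; rewrite /M0 gtn_eqF // ltnNge ltnW.
- by move=> r s; rewrite /M0 eqn_add2r ltn_add2r subnDr /dec_diag modnDr.
Qed.

Lemma M0_diag1 cs r : (0 < size cs)%N -> M0 cs r r.+1 = dec_diag (nth (0, 0, 0)%N cs 0) r.
Proof. by move=> cs_gt0; rewrite /M0 ltn_eqF // ltnSn subSnn cs_gt0. Qed.

Lemma M0_diag2 cs r : (1 < size cs)%N -> M0 cs r r.+2 = dec_diag (nth (0, 0, 0)%N cs 1) r.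
Proof. by move=> cs_gt1; rewrite /M0 ltn_eqF // ltnW // (_ : r.+2 - r = 2)%N ?cs_gt1 //; lia. Qed.

Ltac blk_compute := apply/matrixP;
  let i := fresh "i" in let j := fresh "j" in move=> i j;
  rewrite !mxE ?big_ord_recr ?big_ord0 /= ?mxE;
  case: i => [[|[|[|?]]] ?] //; case: j => [[|[|[|?]]] ?] //;
  apply/eqP; vm_compute; reflexivity.

Lemma in_group_x0x1 : in_group (imul x0 x1).
Proof. exact/in_group_imul/in_group_M0/in_group_M0. Qed.

Lemma in_group_xx : in_group xx.
Proof. exact/in_group_iinv/in_group_x0x1. Qed.

Lemma in_group_x2xx : in_group (imul x2 xx).
Proof. exact/in_group_imul/in_group_xx/in_group_M0. Qed.

Lemma in_group_iinv_x2 : in_group (iinv x2).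
Proof. exact/in_group_iinv/in_group_M0. Qed.

Lemma in_group_yy : in_group yy.
Proof. exact/in_group_imul/in_group_iinv_x2/in_group_x2xx. Qed.

(* [exact:] unfolds [x0], [x1], [x2] to match [in_group_M0]; a [Hint Resolve] would not. *)
Local Hint Extern 0 (in_group _) => exact: in_group_M0 : core.
Local Hint Resolve in_group_x0x1 in_group_xx in_group_x2xx in_group_iinv_x2 in_group_yy : core.

Lemma xx_diag1 r : xx r r.+1 = dec_diag (28, 235, 129)%N r.
Proof.
move: r; apply: eq_periodic3 => [r|r|||]; first by rewrite -addSn; case: in_group_xx => _ _ ->.
  exact: dec_diag_periodic.
all: rewrite /xx iinv_diag1 // imul_diag1 // /x0 /x1 ?M0_diag1 //; blk_compute.
Qed.

Lemma xx_diag2 r : xx r r.+2 = dec_diag (29, 211, 263)%N r.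
Proof.
move: r; apply: eq_periodic3 => [r|r|||]; first by rewrite -!addSn; case: in_group_xx => _ _ ->.
  exact: dec_diag_periodic.
all: rewrite /xx iinv_diag2 // imul_diag2 // ?imul_diag1 // /x0 /x1 ?M0_diag1 ?M0_diag2 //.
all: blk_compute.
Qed.

Lemma yy_diag1 r : yy r r.+1 = dec_diag (28, 235, 129)%N r.
Proof.
move: r; apply: eq_periodic3 => [r|r|||]; first by rewrite -addSn; case: in_group_yy => _ _ ->.
  exact: dec_diag_periodic.
all: rewrite /yy imul_diag1 // iinv_diag1 // imul_diag1 // xx_diag1 /x2 ?M0_diag1 //.
all: blk_compute.
Qed.

Lemma yy_diag2 r : yy r r.+2 = dec_diag (58, 3, 445)%N r.
Proof.
move: r; apply: eq_periodic3 => [r|r|||]; first by rewrite -!addSn; case: in_group_yy => _ _ ->.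
  exact: dec_diag_periodic.
all: rewrite /yy imul_diag2 // iinv_diag2 // ?iinv_diag1 // imul_diag2 // ?imul_diag1 //.
all: rewrite xx_diag2 ?xx_diag1 /x2 ?M0_diag1 ?M0_diag2 //.
all: blk_compute.
Qed.

Ltac diag_compute := apply: eq_periodic3 => [r|r|||];
  rewrite ?sq_lead_periodic ?sq_next_periodic ?dec_diag_periodic //;
  rewrite /sq_lead /sq_next; blk_compute.

Definition pow2_lead (n : nat) : dtriple :=
  if odd n then (51, 89, 196)%N else (28, 235, 129)%N.

Lemma sq_lead_pow2 n :
  sq_lead (if odd n then 2 else 1) (pow2_lead n) =1 dec_diag (pow2_lead n.+1).
Proof. by rewrite /pow2_lead /=; case: odd; diag_compute. Qed.

Lemma isM_ipow1 X cs : isM 0 cs X -> isM (2 ^ 0 - 1) cs (ipow X (2 ^ 0)).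
Proof. by move=> XM; rewrite /= imulm1 //; case: XM => [[]]. Qed.

Lemma xx_pow2 n : isM (2 ^ n - 1)
  [:: pow2_lead n; if n is 0 then (29, 211, 263) else (0, 0, 0)]%N (ipow xx (2 ^ n)).
Proof.
elim: n => [|n IH].
  apply: isM_ipow1; split=> // [r k|r [|[|[]]] // _]; first by lia.
  - by rewrite addn0 addn1 xx_diag1.
  - by rewrite addn0 addn2 xx_diag2.
apply: (isM_pow2S (expn2_mod3 n) IH); first exact: sq_lead_pow2.
case: n {IH} => [|n]; last exact: sq_next0.
diag_compute.
Qed.

Lemma yy_pow2 n : isM (2 ^ n - 1)
  [:: pow2_lead n; if n is 0 then (58, 3, 445)
                   else if odd n then (0, 157, 106) else (39, 208, 186)]%N
  (ipow yy (2 ^ n)).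
Proof.
elim: n => [|n IH].
  apply: isM_ipow1; split=> // [r k|r [|[|[]]] // _]; first by lia.
  - by rewrite addn0 addn1 yy_diag1.
  - by rewrite addn0 addn2 yy_diag2.
apply: (isM_pow2S (expn2_mod3 n) IH); first exact: sq_lead_pow2.
by case: n {IH} => [|n]; rewrite /pow2_lead /=; last case: odd; diag_compute.
Qed.

Theorem proposition4p1 : forall j : nat,
  [/\ isM (2 ^ (2 * j + 1) - 1) [:: (51, 89, 196); (0, 0, 0)] (ipow xx (2 ^ (2 * j + 1))),
      isM (2 ^ (2 * j + 1) - 1) [:: (51, 89, 196); (0, 157, 106)] (ipow yy (2 ^ (2 * j + 1))),
      isM (2 ^ (2 * j + 2) - 1) [:: (28, 235, 129); (0, 0, 0)] (ipow xx (2 ^ (2 * j + 2)))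
    & isM (2 ^ (2 * j + 2) - 1) [:: (28, 235, 129); (39, 208, 186)] (ipow yy (2 ^ (2 * j + 2)))]%N.
Proof.
move=> j; rewrite addn1 addn2 mul2n.
have := xx_pow2 j.*2.+1; have := yy_pow2 j.*2.+1.
have := xx_pow2 j.*2.+2; have := yy_pow2 j.*2.+2.
rewrite /pow2_lead /= odd_double /=.
by move=> yy_even xx_even yy_odd xx_odd; split.
Qed.
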